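(* Let $A=\Bbbk Q/I$ be a finite-dimensional triangular monomial algebra, let $m,n>0$, and let $x\in\Bbbk(\Gamma_{m-1}\|\mathcal B)$ and $y\in\Bbbk(\Gamma_{n-1}\|\mathcal B)$ be irreducible cocycles. If $x\smile y\ne 0$, then $y\smile x=0$ (at the cochain level).
   Context: Let $\Bbbk$ be a field, $Q=(Q_0,Q_1,s,t)$ a finite quiver, and $A=\Bbbk Q/I$ a finite-dimensional monomial algebra, i.e. $I$ is an ideal generated by paths of length at least $2$. $A$ is triangular if $Q$ has no oriented cycles. Let $E=\Bbbk Q_0$, $A^e=A\otimes_\Bbbk A^{\mathrm{op}}$. Paths are written from right to left ($p=\alpha_n\cdots\alpha_1$, $t(\alpha_i)=s(\alpha_{i+1})$); $qp$ is concatenation. $\mathcal B$ = set of paths not in $I$ (a basis of $A$). If $p=bqa$, $q$ is a divisor; $q\le p$ denotes an occurrence with $\mathrm{pre}_p(q)=a$, $\mathrm{suf}_p(q)=b$; suffix/prefix mean $b$/$a$ trivial; proper means $q\ne p$. For $n\ge -1$, a left $n$-ambiguity is a path $p=u_{-1}u_0\cdots u_n$ with $u_{-1}\in Q_0$, $u_0\in Q_1$, $u_i\in\mathcal B$, and for $0\le i\le n-1$, $u_iu_{i+1}\in I$ while no proper suffix of $u_iu_{i+1}$ lies in $I$; a right $n$-ambiguity is $p=v_n\cdots v_0v_{-1}$ with $v_{-1}\in Q_0$, $v_0\in Q_1$, $v_i\in\mathcal B$, $v_{i+1}v_i\in I$ and no proper prefix of $v_{i+1}v_i$ in $I$. These notions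 coincide; $\Gamma_n$ is the set of $n$-ambiguities; decompositions are unique; $\sigma_m(p):=u_0\cdots u_m$, $\pi_m(p):=v_m\cdots v_0$; $\mathrm{Sub}(p)=\{q\in\Gamma_{n-1}:q\le p\}$. Bardzell's resolution: $\mathbb B(A)_{n+1}=A\otimes_E\Bbbk\Gamma_n\otimes_EA$, with $d(1\otimes p\otimes1)=\sum_{q\in\mathrm{Sub}(p)}\mathrm{suf}_p(q)\otimes q\otimes\mathrm{pre}_p(q)$ for $p\in\Gamma_n$, $n$ odd, and $d(1\otimes p\otimes1)=\mathrm{suf}_p(\pi_{n-1}(p))\otimes\pi_{n-1}(p)\otimes1-1\otimes\sigma_{n-1}(p)\otimes\mathrm{pre}_p(\sigma_{n-1}(p))$ for $n$ even. Let $\Bbbk(\Gamma_n\|\mathcal B):=\mathrm{Hom}_{E^e}(\Bbbk\Gamma_n,A)\cong\mathrm{Hom}_{A^e}(\mathbb B(A)_{n+1},A)$ (cochains of degree $n+1$); it has basis the maps $(p\|b)$ for $p\in\Gamma_n$, $b\in\mathcal B$ parallel to $p$, where $(p\|b)(q)=b$ if $q=p$ and $0$ for other $q\in\Gamma_n$. The differential is $(\partial f)(q)=\hat f(d(1\otimes q\otimes 1))$ with $\hat f(c\otimes p\otimes a)=c\,f(p)\,a$. A cocycle $x=\sum_{i=1}^k\alpha_i(p_i\|b_i)$ with all $\alpha_i\ne0$ and the $(p_i\|b_i)$ pairwise distinct is irreducible if for every proper nonempty subsequence $i_1<\dots<i_\ell$ ($\ell<k$) and all nonzero $\beta_j\in\Bbbk$,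 $\partial(\sum_j\beta_j(p_{i_j}\|b_{i_j}))\ne0$. Cup product of cochains: for $g\in\Bbbk(\Gamma_{j-1}\|\mathcal B)$ and $f\in\Bbbk(\Gamma_{i-1}\|\mathcal B)$, $g\smile f\in\Bbbk(\Gamma_{i+j-1}\|\mathcal B)$ is $(g\smile f)(q)=\sum e\,g(p_2)\,c\,f(p_1)\,a$ for $q\in\Gamma_{i+j-1}$, the sum running over all ways of writing $q=e\,p_2\,c\,p_1\,a$ as a concatenation of paths with $p_1\in\Gamma_{i-1}$, $p_2\in\Gamma_{j-1}$, and products taken in $A$. In particular $((p_2\|b_2)\smile(p_1\|b_1))(q)=\sum_{q=e p_2 c p_1 a}e\,b_2\,c\,b_1\,a$. *)

From mathcomp Require Import all_boot all_algebra.
Set Implicit Arguments.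
Unset Strict Implicit.
Unset Printing Implicit Defensive.
Import GRing.Theory.
Local Open Scope ring_scope.

Fixpoint cuts (T : Type) (w : seq T) (k : nat) {struct k} : seq (seq (seq T)) :=
  match k with
  | 0 => if w is [::] then [:: [::]] else [::]
  | k'.+1 => flatten [seq [seq take i w :: c | c <- cuts (drop i w) k']
                     | i <- iota 0 (size w).+1]
  end.

Section Bardzell.
(* A finite quiver Q = (V, Ar, src, tgt), a field K, and a finite list of
   generating paths [rels] of the monomial ideal I. *)
Variables (K : fieldType) (V Ar : finType) (src tgt : Ar -> V)
          (rels : seq (seq Ar)).

(* CONVENTION: a path is a pair (v, w) where w is the list of arrows in the
   WRITTEN (right-to-left) order: the path alpha_n ... alpha_1 is
   (s(alpha_1), [:: alpha_n; ...; alpha_1]); v is the source vertex.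
   The trivial path e_v is (v, [::]).  Concatenation q p is (p.1, q.2 ++ p.2). *)
Definition qpath := (V * seq Ar)%type.

Definition chainw (w : seq Ar) : bool := sorted (fun b c => src b == tgt c) w.
Definition ptgt (p : qpath) : V := if p.2 is a :: _ then tgt a else p.1.
Definition valid (p : qpath) : bool :=
  chainw p.2 && (if p.2 is a :: w' then src (last a w') == p.1 else true).

(* monomial ideal generated by rels: a path lies in I iff it has a generator
   as a divisor *)
Definition inI (w : seq Ar) : bool := has (fun r => infix r w) rels.
Definition inB (p : qpath) : bool := valid p && ~~ inI p.2.
Definition parallel (p r : qpath) : bool := (p.1 == r.1) && (ptgt p == ptgt r).

Definition triangular : Prop :=
  forall p : qpath, valid p -> p.2 != [::] -> ptgt p != p.1.

(* the subpath of q occupying the written positions [i, j) *)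
Definition sub (q : qpath) (i j : nat) : qpath :=
  (ptgt (q.1, drop j q.2), drop i (take j q.2)).

(* Elements of A = kQ/I, as coefficient functions on paths (supported on B). *)
Definition Aelt := qpath -> K.
Definition emb (p : qpath) : Aelt := fun r => if inB p && (r == p) then 1 else 0.
Definition mulA (a b : Aelt) : Aelt := fun r =>
  if inB r then \sum_(i < (size r.2).+1) a (sub r 0 i) * b (sub r i (size r.2))
  else 0.

Definition no_proper_suffix_in_I (c : seq Ar) : bool :=   (* paper's "suffix" = left end *)
  all (fun k => ~~ inI (take k c)) (iota 0 (size c)).
Definition no_proper_prefix_in_I (c : seq Ar) : bool :=   (* paper's "prefix" = right end *)
  all (fun k => ~~ inI (drop k c)) (iota 1 (size c)).

(* us = [:: u_0; ...; u_n], p = u_{-1} u_0 ... u_n *)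
Definition is_left_dec (n : nat) (w : seq Ar) (us : seq (seq Ar)) : bool :=
  [&& size us == n.+1, flatten us == w, size (head [::] us) == 1%N,
      all (fun u => ~~ inI u) us &
      all (fun i => let c := nth [::] us i ++ nth [::] us i.+1 in
                    inI c && no_proper_suffix_in_I c) (iota 0 n)].
(* vs = [:: v_0; ...; v_n], p = v_n ... v_0 v_{-1} *)
Definition is_right_dec (n : nat) (w : seq Ar) (vs : seq (seq Ar)) : bool :=
  [&& size vs == n.+1, flatten (rev vs) == w, size (head [::] vs) == 1%N,
      all (fun u => ~~ inI u) vs &
      all (fun i => let c := nth [::] vs i.+1 ++ nth [::] vs i in
                    inI c && no_proper_prefix_in_I c) (iota 0 n)].

Definition Gamma (n : nat) (p : qpath) : bool :=
  valid p && has (is_left_dec n p.2) (cuts p.2 n.+1).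

(* the (unique) left / right decompositions *)
Definition ldec (n : nat) (w : seq Ar) : seq (seq Ar) :=
  head [::] [seq us <- cuts w n.+1 | is_left_dec n w us].
Definition rdec (n : nat) (w : seq Ar) : seq (seq Ar) :=
  head [::] [seq vs <- [seq rev c | c <- cuts w n.+1] | is_right_dec n w vs].
(* for q in Gamma_{n+1}: lengths of sigma_n(q) = u_0...u_n and
   pi_n(q) = v_n ... v_0 *)
Definition sigma_len (n : nat) (q : qpath) : nat :=
  size (flatten (take n.+1 (ldec n.+1 q.2))).
Definition pi_len (n : nat) (q : qpath) : nat :=
  size (flatten (take n.+1 (rdec n.+1 q.2))).

(* Cochains: f p r = coefficient of the basis path r in f(p). *)
Definition cochain := qpath -> Aelt.

Definition is_cochain (n : nat) (f : cochain) : Prop :=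
  forall p r, f p r != 0 -> [&& Gamma n p, inB r & parallel p r].

Definition cochain_zero (N : nat) (c : cochain) : Prop :=
  forall q, Gamma N q -> forall r, c q r = 0.

(* Differential k(Gamma_n || B) -> k(Gamma_{n+1} || B) induced by Bardzell's
   differential on q in Gamma_{n+1}. *)
Definition dcoch (n : nat) (f : cochain) : cochain := fun q r =>
  let S := size q.2 in
  if odd n.+1 then
    \sum_(i < S.+1) \sum_(j < S.+1)
      (if (i <= j)%N && Gamma n (sub q i j) then
         mulA (mulA (emb (sub q 0 i)) (f (sub q i j))) (emb (sub q j S)) r
       else 0)
  else
    mulA (emb (sub q 0 (S - pi_len n q))) (f (sub q (S - pi_len n q) S)) r
    - mulA (f (sub q 0 (sigma_len n q))) (emb (sub q (sigma_len n q) S)) r.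

Definition cocycle (n : nat) (f : cochain) : Prop := cochain_zero n.+1 (dcoch n f).

Definition irreducible (n : nat) (x : cochain) : Prop :=
  cocycle n x /\
  forall g : cochain,
    (forall p r, g p r != 0 -> x p r != 0) ->
    (exists p r, (x p r != 0) && (g p r == 0)) ->
    (exists p r, g p r != 0) ->
    ~ cocycle n g.

(* cup product g \smile f, for g in k(Gamma_a||B), f in k(Gamma_b||B):
   (g \smile f)(q) = sum over q = e p2 c p1 a' of e g(p2) c f(p1) a'. *)
Definition cup (a b : nat) (g f : cochain) : cochain := fun q r =>
  let S := size q.2 in
  \sum_(i1 < S.+1) \sum_(i2 < S.+1) \sum_(i3 < S.+1) \sum_(i4 < S.+1)
    (if [&& (i1 <= i2)%N, (i2 <= i3)%N, (i3 <= i4)%N,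
            Gamma a (sub q i1 i2) & Gamma b (sub q i3 i4)] then
       mulA (mulA (mulA (mulA (emb (sub q 0 i1)) (g (sub q i1 i2)))
                              (emb (sub q i2 i3)))
                  (f (sub q i3 i4)))
            (emb (sub q i4 S)) r
     else 0).

End Bardzell.

From Pilot Require Import Defs.
From mathcomp Require Import all_boot all_algebra.
Set Implicit Arguments.
Unset Strict Implicit.
Unset Printing Implicit Defensive.
Import GRing.Theory.
Local Open Scope ring_scope.

(* Each term of the differential of a cochain x at (q, r) evaluates x at some
   (P || b) with q = e P a' and r = e b a'.  In an acyclic quiver paths have no
   repeated arrows, so such a term does not change the symmetric difference of
   the arrow sets of the two paths.  Restricting a cocycle to one value of this
   invariant therefore gives a cocycle, and irreducibility forces the whole
   support of x onto a single value.  If that value is nonempty it contains an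
   arrow lying on P or on b for every (P || b) in the support; if it is empty,
   x is concentrated on a single (p || p), whose first arrow does the job.
   Such an arrow al of x lies on a path from the source to the target of P.
   A nonzero x \smile y places a support path of y below one of x inside some
   path, so tgt be reaches src al for the common arrow be of y. *)

Section Reachability.
Variables (V Ar : finType) (src tgt : Ar -> V).

Local Notation valid := (valid src tgt).
Local Notation ptgt := (ptgt tgt).

Lemma valid_cons v a w :
  valid (v, a :: w) = (src a == ptgt (v, w)) && valid (v, w).
Proof.
rewrite /Defs.valid /chainw /=.
by case: w => [|b w] /=; rewrite ?andbT ?andbA.
Qed.

Lemma ptgt_cat v w1 w2 : ptgt (v, w1 ++ w2) = ptgt (ptgt (v, w2), w1).
Proof. by case: w1. Qed.

Lemma valid_cat v w1 w2 :
  valid (v, w1 ++ w2) = valid (ptgt (v, w2), w1) && valid (v, w2).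
Proof.
elim: w1 => [|a w1 IH] //.
by rewrite !valid_cons IH ptgt_cat andbA.
Qed.

Definition reachable (u z : V) := exists w, valid (u, w) && (ptgt (u, w) == z).

Lemma reachable_trans u z t : reachable u z -> reachable z t -> reachable u t.
Proof.
move=> [w1 /andP[v1 /eqP e1]] [w2 /andP[v2 /eqP e2]].
by exists (w2 ++ w1); rewrite valid_cat ptgt_cat e1 v1 v2 e2 eqxx.
Qed.

Lemma reachable_arrow a : reachable (src a) (tgt a).
Proof. by exists [:: a]; rewrite valid_cons /= !eqxx. Qed.

Lemma reachable_mem v w a : valid (v, w) -> a \in w ->
  reachable v (src a) /\ reachable (tgt a) (ptgt (v, w)).
Proof.
move=> + aw; case/splitPr: aw => w1 w2.
rewrite valid_cat valid_cons => /and3P[v1 /eqP e v2].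
split; first by exists w2; rewrite v2 e eqxx.
by exists w1; rewrite v1 ptgt_cat /= eqxx.
Qed.

Definition vertex_at (q : qpath V Ar) k := ptgt (q.1, drop k q.2).

Lemma drop_take_cat (w : seq Ar) i j :
  (i <= j)%N -> drop i (take j w) ++ drop j w = drop i w.
Proof.
move=> /subnKC <-.
by rewrite addnC -take_drop -drop_drop cat_take_drop.
Qed.

Lemma sub_split (q : qpath V Ar) i j : (i <= j)%N ->
  q.2 = take i q.2 ++ (sub tgt q i j).2 ++ drop j q.2.
Proof. by move=> ij; rewrite /sub /= drop_take_cat // cat_take_drop. Qed.

Lemma valid_sub q i j : valid q -> (i <= j)%N -> valid (sub tgt q i j).
Proof.
case: q => v w /=; rewrite -{1}(cat_take_drop j w) valid_cat => /andP[+ _] ij.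
by rewrite -{1}(cat_take_drop i (take j w)) valid_cat => /andP[].
Qed.

Lemma sub_ptgt q i j : (i <= j)%N -> ptgt (sub tgt q i j) = vertex_at q i.
Proof. by move=> ij; rewrite /sub /vertex_at /= -ptgt_cat drop_take_cat. Qed.

Lemma reachable_sub q i j :
  valid q -> (i <= j)%N -> reachable (vertex_at q j) (vertex_at q i).
Proof.
move=> vq ij; exists (sub tgt q i j).2.
have := valid_sub vq ij; have := sub_ptgt q ij.
by rewrite /sub /= => -> ->; rewrite eqxx.
Qed.

Hypothesis Htri : triangular src tgt.

Lemma reachable_arrow_back a : ~ reachable (tgt a) (src a).
Proof.
move=> [w /andP[vw /eqP e]].
have := @Htri (tgt a, a :: w).
by rewrite valid_cons e eqxx vw /= eqxx => /(_ isT isT).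
Qed.

Lemma valid_uniq v w : valid (v, w) -> uniq w.
Proof.
elim: w => [|a w IH] //=; rewrite valid_cons => /andP[/eqP e vw].
rewrite IH // andbT; apply/negP => aw.
have [_ tgt_src] := reachable_mem vw aw.
by apply: (@reachable_arrow_back a); rewrite e.
Qed.

Lemma valid_path_eq_mem v w w' : valid (v, w) -> valid (v, w') ->
  ptgt (v, w) = ptgt (v, w') -> w =i w' -> w = w'.
Proof.
elim: w w' => [|a w IH] [|c w'] //.
- by move=> _ _ _ /(_ c); rewrite inE eqxx.
- by move=> _ _ _ /(_ a); rewrite inE eqxx.
rewrite !valid_cons => /andP[/eqP ea vw] /andP[/eqP ec vw'] etgt eqmem.
have {}etgt : tgt a = tgt c := etgt.
have ac : a = c.
  apply/eqP/negP => /negP nac.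
  have aw' : a \in w' by move: (eqmem a); rewrite !inE eqxx (negbTE nac).
  have [_ reach] := reachable_mem vw' aw'.
  by apply: (@reachable_arrow_back c); rewrite ec -etgt.
subst c; congr (_ :: _); apply: IH => //; first by rewrite -ea.
have /andP[aw _] : uniq (a :: w).
  by apply: (@valid_uniq v); rewrite valid_cons ea eqxx.
have /andP[aw' _] : uniq (a :: w').
  by apply: (@valid_uniq v); rewrite valid_cons ec eqxx.
move=> z; move: (eqmem z); rewrite !inE.
by case: (eqVneq z a) => [->|]; rewrite ?(negbTE aw) ?(negbTE aw').
Qed.

End Reachability.

Lemma mem_cat3_neq (T : eqType) (e s s' a : seq T) z :
  uniq (e ++ s ++ a) -> uniq (e ++ s' ++ a) ->
  ((z \in e ++ s ++ a) != (z \in e ++ s' ++ a)) = ((z \in s) != (z \in s')).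
Proof.
have uniq_mid t : uniq (e ++ t ++ a) -> uniq t.
  by rewrite !cat_uniq => /and3P[_ _ /andP[]].
have eq_nat (b1 b2 : bool) : (b1 == b2) = (nat_of_bool b1 == b2).
  by case: b1; case: b2.
move=> us us'; congr (~~ _); rewrite [LHS]eq_nat [RHS]eq_nat.
rewrite -(count_uniq_mem z us) -(count_uniq_mem z us').
rewrite -(count_uniq_mem z (uniq_mid _ us)).
rewrite -(count_uniq_mem z (uniq_mid _ us')).
by rewrite !count_cat eqn_add2l eqn_add2r.
Qed.

Lemma sumr_neq0_exists (I : finType) (R : nmodType) (F : I -> R) :
  \sum_i F i != 0 -> exists i, F i != 0.
Proof.
have [/existsP[i Fi] _|/existsPn F0] := boolP [exists i, F i != 0].
  by exists i.
by rewrite big1 ?eqxx // => i _; apply/eqP; rewrite -[_ == _]negbK F0.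
Qed.

Section Locality.
Variables (K : fieldType) (V Ar : finType) (src tgt : Ar -> V)
          (rels : seq (seq Ar)).

Local Notation mulA := (@Defs.mulA K V Ar src tgt rels).
Local Notation emb := (@Defs.emb K V Ar src tgt rels).
Local Notation sub := (@Defs.sub V Ar tgt).
Local Notation inB := (@Defs.inB V Ar src tgt rels).
Local Notation dcoch := (@Defs.dcoch K V Ar src tgt rels).

Lemma emb_neq0 p s : emb p s != 0 -> s = p.
Proof. by rewrite /Defs.emb; case: ifP => [/andP[_ /eqP]|]; rewrite ?eqxx. Qed.

Lemma sub0E (r : qpath V Ar) i : (sub r 0 i).2 = take i r.2.
Proof. by rewrite /Defs.sub /= drop0. Qed.

Lemma sub_sizeE (r : qpath V Ar) i : (sub r i (size r.2)).2 = drop i r.2.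
Proof. by rewrite /Defs.sub /= take_size. Qed.

Lemma mulA_embl_eq p (F F' : Aelt K V Ar) r :
  (forall b, inB r -> r.2 = p.2 ++ b.2 -> F b = F' b) ->
  mulA (emb p) F r = mulA (emb p) F' r.
Proof.
move=> eqF; rewrite /Defs.mulA; case Br: (inB r) => //.
apply: eq_bigr => i _.
have [->|nz] := eqVneq (emb p (sub r 0 i)) 0; first by rewrite !mul0r.
by rewrite eqF // -(emb_neq0 nz) sub0E sub_sizeE cat_take_drop.
Qed.

Lemma mulA_embr_eq p (F F' : Aelt K V Ar) r :
  (forall b, inB r -> r.2 = b.2 ++ p.2 -> F b = F' b) ->
  mulA F (emb p) r = mulA F' (emb p) r.
Proof.
move=> eqF; rewrite /Defs.mulA; case Br: (inB r) => //.
apply: eq_bigr => i _.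
have [->|nz] := eqVneq (emb p (sub r i (size r.2))) 0; first by rewrite !mulr0.
by rewrite eqF // -(emb_neq0 nz) sub0E sub_sizeE cat_take_drop.
Qed.

Lemma mulA_eq0l (F G : Aelt K V Ar) r : (forall s, F s = 0) -> mulA F G r = 0.
Proof.
move=> F0; rewrite /Defs.mulA; case: ifP => // _.
by rewrite big1 // => i _; rewrite F0 mul0r.
Qed.

Lemma mulA_eq0r (F G : Aelt K V Ar) r : (forall s, G s = 0) -> mulA F G r = 0.
Proof.
move=> G0; rewrite /Defs.mulA; case: ifP => // _.
by rewrite big1 // => i _; rewrite G0 mulr0.
Qed.

Lemma mulA_neq0l (F G : Aelt K V Ar) r : mulA F G r != 0 -> exists s, F s != 0.
Proof.
rewrite /Defs.mulA; case: ifP => _; last by rewrite eqxx.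
move=> /sumr_neq0_exists[i]; rewrite mulf_eq0 negb_or => /andP[nz _].
by exists (sub r 0 i).
Qed.

Lemma mulA_neq0r (F G : Aelt K V Ar) r : mulA F G r != 0 -> exists s, G s != 0.
Proof.
rewrite /Defs.mulA; case: ifP => _; last by rewrite eqxx.
move=> /sumr_neq0_exists[i]; rewrite mulf_eq0 negb_or => /andP[_ nz].
by exists (sub r i (size r.2)).
Qed.

Lemma dcoch_local n (f f' : cochain K V Ar) q r :
  (forall i j b, (i <= j)%N -> inB r -> r.2 = take i q.2 ++ b.2 ++ drop j q.2 ->
     f (sub q i j) b = f' (sub q i j) b) ->
  dcoch n f q r = dcoch n f' q r.
Proof.
move=> eqf; rewrite /dcoch; case: ifP => _.
  apply: eq_bigr => i _; apply: eq_bigr => j _; case: ifP => // /andP[ij _].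
  apply: mulA_embr_eq => s Br es; apply: mulA_embl_eq => b _ eb.
  by apply: eqf => //; rewrite es eb sub0E sub_sizeE catA.
congr (_ - _).
  apply: mulA_embl_eq => b Br eb; apply: eqf; rewrite ?leq_subr //.
  by rewrite eb sub0E drop_size cats0.
apply: mulA_embr_eq => b Br eb; apply: eqf => //.
by rewrite eb sub_sizeE take0.
Qed.

Lemma dcoch_eq0 n (f : cochain K V Ar) q r :
  (forall p s, f p s = 0) -> dcoch n f q r = 0.
Proof.
move=> f0; rewrite /dcoch; case: ifP => _.
  rewrite big1 // => i _; rewrite big1 // => j _.
  by case: ifP => // _; apply: mulA_eq0l => s; apply: mulA_eq0r.
by rewrite mulA_eq0r // mulA_eq0l // subr0.
Qed.

End Locality.

Section IrreducibleCocycles.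
Variables (K : fieldType) (V Ar : finType) (src tgt : Ar -> V)
          (rels : seq (seq Ar)).
Hypothesis Htri : triangular src tgt.

Local Notation sub := (@Defs.sub V Ar tgt).
Local Notation inB := (@Defs.inB V Ar src tgt rels).
Local Notation valid := (@Defs.valid V Ar src tgt).
Local Notation Gamma := (@Defs.Gamma V Ar src tgt rels).
Local Notation cocycle := (@Defs.cocycle K V Ar src tgt rels).

Lemma Gamma_valid N q : Gamma N q -> valid q.
Proof. by case/andP. Qed.

Lemma inB_valid r : inB r -> valid r.
Proof. by case/andP. Qed.

Lemma Gamma_left_dec N q : Gamma N q -> exists us, is_left_dec rels N q.2 us.
Proof. by case/andP => _ /hasP[us _ dec]; exists us. Qed.

Lemma Gamma_neq_nil N q : Gamma N q -> q.2 != [::].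
Proof.
move=> /Gamma_left_dec[[|u us] /and5P[_ /eqP <- /=]] //.
by case: u.
Qed.

(* in the left decomposition [:: u_0; u_1; ...] of q, u_0 u_1 lies in I *)
Lemma Gamma_succ_inI N q : Gamma N.+1 q -> inI rels q.2.
Proof.
move=> /Gamma_left_dec[us /and5P[/eqP size_us /eqP <- _ _ /allP dec]].
case: us size_us dec => [|u0 [|u1 us]] //= _ dec.
have /andP[/hasP[r rr ir] _] := dec 0%N isT.
by apply/hasP; exists r => //; rewrite catA; apply: infix_catr.
Qed.

Definition arrow_symdiff (P b : qpath V Ar) : {set Ar} :=
  [set z | (z \in P.2) != (z \in b.2)].

Lemma arrow_symdiff_splice q r P b e a : valid q -> inB r ->
  q.2 = e ++ P.2 ++ a -> r.2 = e ++ b.2 ++ a ->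
  arrow_symdiff P b = arrow_symdiff q r.
Proof.
move=> vq Br eq_q er; apply/setP => z; rewrite !inE eq_q er mem_cat3_neq //.
  by rewrite -eq_q; case: q vq {eq_q} => ? ? /(valid_uniq Htri).
by rewrite -er; case: r Br {er} => ? ? /inB_valid /(valid_uniq Htri).
Qed.

Definition restrict (x : cochain K V Ar)
  (keep : qpath V Ar -> qpath V Ar -> bool) : cochain K V Ar :=
  fun P b => if keep P b then x P b else 0.

Definition splice_invariant n (keep : qpath V Ar -> qpath V Ar -> bool) :=
  forall q r i j b, Gamma n.+1 q -> inB r -> (i <= j)%N ->
    r.2 = take i q.2 ++ b.2 ++ drop j q.2 -> keep (sub q i j) b = keep q r.

Lemma cocycle_restrict n (x : cochain K V Ar) keep :
  splice_invariant n keep -> cocycle n x -> cocycle n (restrict x keep).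
Proof.
move=> inv Cx q Gq r; have [kqr|kqr] := boolP (keep q r).
  rewrite (@dcoch_local K V Ar src tgt rels n _ x); first exact: Cx.
  by move=> i j b ij Br er; rewrite /restrict (inv q r i j b) ?kqr.
rewrite (@dcoch_local K V Ar src tgt rels n _ (fun _ _ => 0)) ?dcoch_eq0 //.
by move=> i j b ij Br er; rewrite /restrict (inv q r i j b) // (negbTE kqr).
Qed.

Lemma irreducible_restrict n (x : cochain K V Ar) keep p r :
  irreducible src tgt rels n x -> splice_invariant n keep ->
  x p r != 0 -> keep p r -> forall P b, x P b != 0 -> keep P b.
Proof.
move=> [Cx irr] inv xpr kpr P b xPb; apply/negPn/negP => kPb.
apply: (irr (restrict x keep) _ _ _ (cocycle_restrict inv Cx)).
- by move=> P' b'; rewrite /restrict; case: ifP; rewrite ?eqxx.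
- by exists P, b; rewrite /restrict (negbTE kPb) xPb eqxx.
- by exists p, r; rewrite /restrict kpr.
Qed.

Lemma splice_invariant_symdiff n S :
  splice_invariant n (fun P b => arrow_symdiff P b == S).
Proof.
move=> q r i j b Gq Br ij er.
by rewrite (arrow_symdiff_splice (Gamma_valid Gq) Br (sub_split tgt q ij) er).
Qed.

(* Both sides are false: an (n+1)-ambiguity lies in I, so it is never a basis
   path r, and splicing b = P = p back into q would give r = q. *)
Lemma splice_invariant_diag n p :
  splice_invariant n (fun P b => (P == p) && (b == p)).
Proof.
move=> q r i j b Gq Br ij er.
have rq : r.2 != q.2.
  apply: contraTneq Br; rewrite /Defs.inB => ->.
  by rewrite (Gamma_succ_inI Gq) andbF.
transitivity false.
  apply/negbTE/negP => /andP[/eqP sP /eqP bP].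
  by move: rq; rewrite er bP -sP -sub_split ?eqxx.
apply/esym/negbTE/negP => /andP[/eqP qp /eqP rp].
by move: rq; rewrite qp rp eqxx.
Qed.

Definition common_arrow (x : cochain K V Ar) (a : Ar) :=
  forall P b, x P b != 0 -> (a \in P.2) || (a \in b.2).

Lemma irreducible_common_arrow n (x : cochain K V Ar) p0 r0 :
  is_cochain src tgt rels n x -> irreducible src tgt rels n x -> x p0 r0 != 0 ->
  exists a, common_arrow x a.
Proof.
move=> Hx Ix nz0.
have [S0|[a aS]] := set_0Vmem (arrow_symdiff p0 r0); last first.
  have supp :=
    irreducible_restrict Ix (splice_invariant_symdiff _) nz0 (eqxx _).
  exists a => P b /supp /eqP SP; move: aS; rewrite -SP inE.
  by apply: contraNT => /norP[/negbTE -> /negbTE ->].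
have /and3P[G0 B0 /andP[/eqP e1 /eqP e2]] := Hx _ _ nz0.
have r0E : r0 = p0.
  case: p0 r0 {nz0} e1 G0 B0 e2 S0 => [v w] [v' w'] /= <- G0 B0 e2 S0.
  suff -> : w = w' by [].
  apply: (valid_path_eq_mem Htri (Gamma_valid G0) (inB_valid B0) e2) => z.
  by move/setP: S0 => /(_ z); rewrite inE in_set0 => /negbFE/eqP.
have supp := irreducible_restrict Ix (splice_invariant_diag p0) nz0.
rewrite r0E !eqxx in supp.
case E: p0.2 (Gamma_neq_nil G0) => [|a w] // _.
by exists a => P b /(supp isT) /andP[/eqP -> _]; rewrite E mem_head.
Qed.

End IrreducibleCocycles.

Section CupProduct.
Variables (K : fieldType) (V Ar : finType) (src tgt : Ar -> V)
          (rels : seq (seq Ar)).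

Local Notation sub := (@Defs.sub V Ar tgt).
Local Notation Gamma := (@Defs.Gamma V Ar src tgt rels).
Local Notation reachable := (reachable src tgt).

Lemma cup_neq0 a b (g f : cochain K V Ar) q r :
  cup src tgt rels a b g f q r != 0 ->
  exists i1 i2 i3 i4, [/\ (i1 <= i2)%N, (i2 <= i3)%N, (i3 <= i4)%N,
    exists s, g (sub q i1 i2) s != 0 & exists s, f (sub q i3 i4) s != 0].
Proof.
rewrite /cup => /sumr_neq0_exists[i1] /sumr_neq0_exists[i2].
move=> /sumr_neq0_exists[i3] /sumr_neq0_exists[i4].
case: ifP => [/and5P[l12 l23 l34 _ _] nz|_]; last by rewrite eqxx.
exists i1, i2, i3, i4; split => //.
  by have [? /mulA_neq0l[? /mulA_neq0l[? /mulA_neq0r]]] := mulA_neq0l nz.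
by have [? /mulA_neq0r] := mulA_neq0l nz.
Qed.

Lemma support_reachable n (x : cochain K V Ar) P b a :
  is_cochain src tgt rels n x -> x P b != 0 -> (a \in P.2) || (a \in b.2) ->
  reachable P.1 (src a) /\ reachable (tgt a) (ptgt tgt P).
Proof.
move=> Hx /Hx /and3P[GP Bb /andP[/eqP e1 /eqP e2]].
case/orP; first by case: P GP {e1 e2} => v w /Gamma_valid; apply: reachable_mem.
by rewrite e1 e2; case: b Bb {e1 e2} => v w /inB_valid; apply: reachable_mem.
Qed.

Lemma cup_reachable N a b (g f : cochain K V Ar) al be q r :
  is_cochain src tgt rels a g -> is_cochain src tgt rels b f ->
  common_arrow g al -> common_arrow f be -> Gamma N q ->
  cup src tgt rels a b g f q r != 0 -> reachable (tgt be) (src al).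
Proof.
move=> Hg Hf gal fbe Gq.
move=> /cup_neq0[i1 [i2 [i3 [i4 [l12 l23 l34 [s2 ng] [s1 nf]]]]]].
have [_ reach_f] := support_reachable Hf nf (fbe _ _ nf).
have [reach_g _] := support_reachable Hg ng (gal _ _ ng).
rewrite sub_ptgt // in reach_f.
apply: reachable_trans reach_f (reachable_trans _ reach_g).
exact: reachable_sub (Gamma_valid Gq) l23.
Qed.

End CupProduct.

Theorem mainTheorem13 (K : fieldType) (V Ar : finType) (src tgt : Ar -> V)
    (rels : seq (seq Ar))
    (Hrels : forall r, r \in rels -> (1 < size r)%N && chainw src tgt r)
    (Htri : triangular src tgt)
    (m n : nat) (hm : (0 < m)%N) (hn : (0 < n)%N)
    (x y : cochain K V Ar)
    (Hx : is_cochain src tgt rels m.-1 x) (Hy : is_cochain src tgt rels n.-1 y)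
    (Ix : irreducible src tgt rels m.-1 x) (Iy : irreducible src tgt rels n.-1 y)
    (Hxy : ~ cochain_zero src tgt rels (m + n).-1 (cup src tgt rels m.-1 n.-1 x y)) :
  cochain_zero src tgt rels (n + m).-1 (cup src tgt rels n.-1 m.-1 y x).
Proof.
move=> q' Gq' r'; apply/eqP/negPn/negP => nz'.
apply: Hxy => q Gq r; apply/eqP/negPn/negP => nz.
have [i1 [i2 [i3 [i4 [_ _ _ [s2 nx] [s1 ny]]]]]] := cup_neq0 nz.
have [al xal] := irreducible_common_arrow Htri Hx Ix nx.
have [be ybe] := irreducible_common_arrow Htri Hy Iy ny.
apply: (reachable_arrow_back Htri (a := al)).
apply: reachable_trans (cup_reachable Hy Hx ybe xal Gq' nz') _.
apply: reachable_trans (reachable_arrow src tgt be) _.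
exact: cup_reachable Hx Hy xal ybe Gq nz.
Qed.
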